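(* Let $P$ be a 6-stack of rank $n$ and let $Q$ be a retract of $P$ that is a 4-tower, such that $\#(P(0)\cap Q(0))=2$, where $Q(0)$ is the set of minimal elements of $Q$. Then $n\ge 3$ and the poset $P(3,n)$ has a retract that is a 4-tower.
   Context: All posets are finite. For a poset $P$ and $p\in P$, the rank $r(p)$ of $p$ is the largest $m$ such that there is a chain $p_0<\dots<p_m=p$ in $P$. $P$ is ranked of rank $r(P)$ if every maximal chain has exactly $r(P)+1$ elements. For $0\le i\le j$, $P(i,j)=\{p\in P:i\le r(p)\le j\}$, $P(i)=P(i,i)$ (induced order). A subset $Q\subseteq P$ (induced order) is a retract of $P$ if there is an order-preserving $f:P\to Q$ with $f(q)=q$ for all $q\in Q$. The 6-crown $C_6$ is the poset on $\{x_0,x_1,x_2,y_0,y_1,y_2\}$ whose only strict comparabilities are $x_0<y_0>x_1<y_1>x_2<y_2>x_0$. A 6-stack is a ranked poset $P$ of rank $n\ge1$ such that $P(i,i+1)\cong C_6$ for each $0\le i<n$. The ordinal sum of posets $P_1,\dots,P_k$ ($k\ge1$) is their disjoint union ordered by the orders of the $P_i$ together with $p<q$ whenever $p\in P_i,q\in P_j,i<j$. A 4-tower is an ordinal sum of one or more two-element antichains. *)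

From HB Require Import structures.
From mathcomp Require Import all_boot all_order.
Set Implicit Arguments. Unset Strict Implicit. Unset Printing Implicit Defensive.
Import Order.Theory.
Local Open Scope order_scope.

(* A finite poset P is a finite type T with a partial order (finPOrderType).
   Subposets are subsets {set T} with the induced order. *)

Section Defs.
Context {disp : Order.disp_t} {T : finPOrderType disp}.

Definition has_chain_to (p : T) (m : nat) : bool :=
  [exists s : (m.+1).-tuple T, sorted <%O (val s) && (last p (val s) == p)].

(* rank r(p): the largest m such that such a chain exists
   (any chain has at most #|T| elements, so m < #|T|) *)
Definition rank (p : T) : nat := \max_(m < #|T| | has_chain_to p m) m.

Definition is_chain (C : {set T}) : bool :=
  [forall x in C, forall y in C, (x <= y) || (y <= x)].
Definition maximal_chain (C : {set T}) : bool :=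
  is_chain C && [forall x, is_chain (x |: C) ==> (x \in C)].

Definition ranked (r : nat) : Prop :=
  forall C : {set T}, maximal_chain C -> #|C| = r.+1.

Definition Prange (i j : nat) : {set T} := [set p | i <= rank p <= j].

(* the order of the 6-crown on 'I_6: x_k = k, y_k = 3 + k (k < 3);
   x_i < y_j iff i = j or i = j + 1 mod 3 *)
Definition crown_le (a b : 'I_6) : bool :=
  (a == b) || [&& (a < 3)%N, (3 <= b)%N &
                  ((val a == b - 3) || (val a == (b - 3).+1 %% 3))].

Definition iso_C6 (A : {set T}) : Prop :=
  exists f : 'I_6 -> T, [/\ injective f, A = f @: setT &
     forall a b, (f a <= f b) = crown_le a b].

Definition six_stack (n : nat) : Prop :=
  [/\ (1 <= n)%N, ranked n & forall i, (i < n)%N -> iso_C6 (Prange i i.+1)].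

(* the ordinal sum of k two-element antichains, on 'I_k * bool *)
Definition tower_le (k : nat) (x y : 'I_k * bool) : bool :=
  (x.1 < y.1)%N || (x == y).

Definition four_tower (Q : {set T}) : Prop :=
  exists k : nat, (1 <= k)%N /\
    exists g : 'I_k * bool -> T, [/\ injective g, Q = g @: setT &
       forall x y, (g x <= g y) = tower_le x y].

Definition retract (A Q : {set T}) : Prop :=
  Q \subset A /\
  exists f : T -> T, [/\ forall x, x \in A -> f x \in Q,
     forall x y, x \in A -> y \in A -> x <= y -> f x <= f y &
     forall q, q \in Q -> f q = q].

Definition minimals (Q : {set T}) : {set T} :=
  [set q in Q | [forall q' in Q, ~~ (q' < q)]].

End Defs.

(* A 6-stack is a stack of levels of three elements, labelled so that elements
   of adjacent levels are comparable exactly when their labels differ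
   ([label_model]).  Let [f] retract everything of rank at least [j] onto a
   tower whose bottom pair lies at rank [j], and let [z] be the label missing
   from that pair.  Then the first level of the tower must consist of the
   elements of label [z] at ranks [j + 1] and [j + 2]: any other position lets
   two elements of distinct labels be sent to a level lying entirely above
   them, which by induction on [n - j] collapses the two elements of that
   level.  The same argument one level up shows that [f] sends everything of
   rank at least [j + 3] to levels [2, 3, ...].  The hypothesis on minimal
   elements puts the bottom pair at rank 0, and for [j = 0] the levels
   [2, 3, ...] form the required 4-tower retract of [P(3, n)]. *)

From mathcomp Require Import all_boot all_order.
From mathcomp Require Import zify.
Set Implicit Arguments. Unset Strict Implicit. Unset Printing Implicit Defensive.
Import Order.Theory.

Section Rank.
Context {disp : Order.disp_t} {T : finPOrderType disp}.

Lemma has_chain_toP (p : T) m : reflect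
  (exists s : seq T, [/\ size s = m.+1, sorted <%O s & last p s = p])
  (has_chain_to p m).
Proof.
apply: (iffP existsP) => [[s /andP [s_sorted /eqP s_last]] | [s [Hs s_sorted s_last]]].
  by exists (val s); rewrite size_tuple.
by exists (@Tuple m.+1 T s (introT eqP Hs)); rewrite /= s_sorted s_last eqxx.
Qed.

Lemma has_chain_to_lt_card (p : T) m : has_chain_to p m -> m < #|T|.
Proof.
move/has_chain_toP => [s [Hs /lt_sorted_uniq s_uniq _]].
by have := max_card (mem s); rewrite (card_uniqP s_uniq) Hs.
Qed.

Lemma rank_ge (p : T) m : has_chain_to p m -> m <= rank p.
Proof.
move=> Hm; have m_lt := has_chain_to_lt_card Hm.
exact: (@leq_bigmax_cond _ (fun m : 'I_#|T| => has_chain_to p m) val (Ordinal m_lt) Hm).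
Qed.

Lemma has_chain_to_rank (p : T) : has_chain_to p (rank p).
Proof.
have T_gt0 : 0 < #|T| by apply/card_gt0P; exists p.
have : 0 < #|[pred m : 'I_#|T| | has_chain_to p m]|.
  by apply/card_gt0P; exists (Ordinal T_gt0); rewrite inE; apply/has_chain_toP; exists [:: p].
case/(eq_bigmax_cond val) => m0 Hm0 E.
by rewrite /rank E; move: Hm0; rewrite inE.
Qed.

Lemma rank_lt (x y : T) : (x < y)%O -> rank x < rank y.
Proof.
move=> xy; have /has_chain_toP [s [Hs s_sorted s_last]] := has_chain_to_rank x.
apply: rank_ge; apply/has_chain_toP; exists (rcons s y).
rewrite size_rcons Hs last_rcons; split=> //.
by case: s Hs s_sorted s_last => // a s _ /= s_sorted s_last; rewrite rcons_path s_sorted s_last.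
Qed.

Lemma exists_lt_rank_pred (y : T) : 0 < rank y ->
  exists x, (x < y)%O /\ rank x = (rank y).-1.
Proof.
move=> ry; have /has_chain_toP [s [Hs s_sorted s_last]] := has_chain_to_rank y.
case/lastP: s Hs s_sorted s_last => [//|s a].
rewrite size_rcons last_rcons => /eqP; rewrite eqSS => /eqP Hs s_sorted a_y; subst a.
case: s Hs s_sorted => [/= Hs|b s Hs]; first lia.
rewrite /= rcons_path => /andP [s_sorted lt_last].
exists (last b s); split=> //.
have : has_chain_to (last b s) (rank y).-1.
  by apply/has_chain_toP; exists (b :: s); split=> //; rewrite Hs; lia.
by move/rank_ge; have := rank_lt lt_last; lia.
Qed.

Lemma sorted_is_chain (s : seq T) : sorted <%O s -> is_chain [set x in s].
Proof.
rewrite lt_sorted_pairwise => s_pw; apply/forallP => x; apply/implyP; rewrite inE => xs.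
apply/forallP => y; apply/implyP; rewrite inE => ys.
elim: s s_pw xs ys => // a s IH /= /andP [Ha s_pw].
rewrite !inE => /orP [/eqP ->|xs] /orP [/eqP ->|ys].
- by rewrite lexx.
- by move/allP: Ha => /(_ y ys) /ltW ->.
- by move/allP: Ha => /(_ x xs) /ltW ->; rewrite orbT.
- exact: IH.
Qed.

(* A chain realising [rank p] extends to a maximal chain, of size [r.+1]. *)
Lemma ranked_rank_le r : ranked (T := T) r -> forall p : T, rank p <= r.
Proof.
move=> P_ranked p; have /has_chain_toP [s [Hs s_sorted _]] := has_chain_to_rank p.
set C := [set x in s].
have C_card : #|C| = (rank p).+1.
  by rewrite -Hs -(card_uniqP (lt_sorted_uniq s_sorted)); apply: eq_card => x; rewrite inE.
case: (@arg_maxnP _ C (fun D => is_chain D && (C \subset D)) (fun D => #|D|)).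
  by rewrite sorted_is_chain // subxx.
move=> D /andP [D_chain CD] D_max.
have : maximal_chain D.
  rewrite /maximal_chain D_chain /=; apply/forallP => x; apply/implyP => xD_chain.
  have CxD : C \subset x |: D by apply: (subset_trans CD); apply/subsetP => y yD; rewrite !inE yD orbT.
  have := D_max (x |: D); rewrite xD_chain CxD /= => /(_ isT).
  by rewrite cardsU1; case: (x \in D) => //=; lia.
by move/P_ranked; have := subset_leq_card CD; lia.
Qed.

End Rank.

Lemma I3_cover (a b c x : 'I_3) : a != b -> b != c -> a != c ->
  [\/ x = a, x = b | x = c].
Proof.
case: a b c x => [[|[|[|a]]] Ha] // [[|[|[|b]]] Hb] // [[|[|[|c]]] Hc] //
  [[|[|[|x]]] Hx] //= _ _ _;
by (try (by constructor 1; apply/val_inj));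
   (try (by constructor 2; apply/val_inj)); constructor 3; apply/val_inj.
Qed.

Lemma I3_avoid2 (a b : 'I_3) : exists c : 'I_3, c != a /\ c != b.
Proof.
case: a b => [[|[|[|a]]] Ha] // [[|[|[|b]]] Hb] //.
all: first [ by exists (@Ordinal 3 0 isT) | by exists (@Ordinal 3 1 isT)
           | by exists (@Ordinal 3 2 isT) ].
Qed.

Definition crown_lt (a b : 'I_6) := (a != b) && crown_le a b.

Lemma crown_lt_bottom (a b : 'I_6) : a < 3 -> crown_lt b a = false.
Proof. by case: a b => [[|[|[|[|[|[|a]]]]]] Ha] // [[|[|[|[|[|[|b]]]]]] Hb]. Qed.

Lemma crown_top_covers (a : 'I_6) : 3 <= a -> exists b : 'I_6, (b < 3) && crown_lt b a.
Proof.
case: a => [[|[|[|[|[|[|a]]]]]] Ha] // _.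
- by exists (@Ordinal 6 0 isT).
- by exists (@Ordinal 6 1 isT).
- by exists (@Ordinal 6 2 isT).
Qed.

Lemma crown_top_misses (b : 'I_6) : 3 <= b -> exists a : 'I_6, (a < 3) && ~~ crown_lt a b.
Proof.
case: b => [[|[|[|[|[|[|b]]]]]] Hb] // _.
- by exists (@Ordinal 6 2 isT).
- by exists (@Ordinal 6 0 isT).
- by exists (@Ordinal 6 1 isT).
Qed.

Lemma crown_missed_uniq (a a' b : 'I_6) : a < 3 -> a' < 3 -> 3 <= b ->
  ~~ crown_lt a b -> ~~ crown_lt a' b -> a = a'.
Proof.
case: a => [[|[|[|[|[|[|a]]]]]] Ha] //; case: a' => [[|[|[|[|[|[|a']]]]]] Ha'] //;
case: b => [[|[|[|[|[|[|b]]]]]] Hb] //= _ _ _; by move=> *; apply/val_inj.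
Qed.

Lemma crown_misses_inj (a b b' : 'I_6) : a < 3 -> 3 <= b -> 3 <= b' ->
  ~~ crown_lt a b -> ~~ crown_lt a b' -> b = b'.
Proof.
case: a => [[|[|[|[|[|[|a]]]]]] Ha] //; case: b' => [[|[|[|[|[|[|b']]]]]] Hb'] //;
case: b => [[|[|[|[|[|[|b]]]]]] Hb] //= _ _ _; by move=> *; apply/val_inj.
Qed.

(* The poset is cut into levels [0..n] of three elements each, labelled by
   ['I_3]; two elements of adjacent levels are comparable iff their labels
   differ, and elements two or more levels apart always are. *)
Definition label_model {disp : Order.disp_t} {T : finPOrderType disp} (n : nat)
    (rk : T -> nat) (lb : T -> 'I_3) (pt : nat -> 'I_3 -> T) : Prop :=
  [/\ forall i c, i <= n -> rk (pt i c) = i,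
      forall i c, i <= n -> lb (pt i c) = c,
      forall x, pt (rk x) (lb x) = x,
      forall x, rk x <= n &
      forall x y, (x < y)%O = (rk x + 2 <= rk y) || ((rk y == (rk x).+1) && (lb x != lb y))].

Section SixStack.
Context {disp : Order.disp_t} {T : finPOrderType disp}.
Variable n : nat.
Hypothesis stack : six_stack (T := T) n.

Lemma rank_le_n (x : T) : rank x <= n.
Proof. by case: stack => _ P_ranked _; exact: ranked_rank_le P_ranked x. Qed.

Lemma crown_at i : i < n -> exists phi : 'I_6 -> T,
  [/\ injective phi, forall a, rank (phi a) = (if a < 3 then i else i.+1),
      forall x, i <= rank x <= i.+1 -> exists a, x = phi a &
      forall a b, (phi a < phi b)%O = crown_lt a b].
Proof.
move=> i_lt; case: stack => _ _ crowns; have [phi [phi_inj E phi_le]] := crowns i i_lt.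
have phi_lt a b : (phi a < phi b)%O = crown_lt a b.
  by rewrite lt_def phi_le (inj_eq phi_inj) /crown_lt eq_sym.
have phi_onto x : i <= rank x <= i.+1 -> exists a, x = phi a.
  move=> rx; have : x \in Prange i i.+1 by rewrite inE.
  by rewrite E => /imsetP [a _ ->]; exists a.
have phi_rank a : i <= rank (phi a) <= i.+1.
  have : phi a \in Prange i i.+1 by rewrite E imset_f.
  by rewrite inE.
exists phi; split=> // a; have := phi_rank a; case: ifP => a_bot ra.
- case: (eqVneq (rank (phi a)) i) => // ra_ne.
  have [x [xa rx]] := exists_lt_rank_pred (ltac:(lia) : 0 < rank (phi a)).
  have [b Eb] := phi_onto x ltac:(lia); subst x.
  by move: xa; rewrite phi_lt crown_lt_bottom // a_bot.
- have [b /andP [b_bot ba]] := crown_top_covers (ltac:(lia) : 3 <= a).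
  have := @rank_lt _ _ (phi b) (phi a); rewrite phi_lt ba => /(_ isT).
  have := phi_rank b; lia.
Qed.

Lemma level_enum i : i <= n -> exists psi : 'I_3 -> T,
  [/\ injective psi, forall c, rank (psi c) = i &
      forall x, rank x = i -> exists c, x = psi c].
Proof.
move=> i_le; have [i_lt|->] : i < n \/ i = n by lia.
- have [phi [phi_inj phi_rank phi_onto _]] := crown_at i_lt.
  exists (fun c : 'I_3 => phi (widen_ord (isT : 3 <= 6) c)); split.
  + by move=> c c' /phi_inj /(congr1 val) /= E; apply/val_inj.
  + by move=> c; rewrite phi_rank /= ltn_ord.
  + move=> x rx; have [a Ea] := phi_onto x ltac:(lia); subst x.
    move: rx; rewrite phi_rank; case: ifP => a_bot ra; last lia.
    by exists (Ordinal a_bot); congr phi; apply/val_inj.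
- have n_gt0 : 0 < n by case: stack.
  have [phi [phi_inj phi_rank phi_onto _]] := crown_at (ltac:(lia) : n.-1 < n).
  exists (fun c : 'I_3 => phi (rshift 3 c)); split.
  + by move=> c c' /phi_inj /(congr1 val) /= /addnI E; apply/val_inj.
  + move=> c; have c_top : (rshift 3 c < 3) = false by rewrite ltnNge leq_addr.
    by rewrite phi_rank c_top; lia.
  + move=> x rx; have [a Ea] := phi_onto x ltac:(lia); subst x.
    move: rx; rewrite phi_rank; case: ifP => a_bot ra; first lia.
    exists (@Ordinal 3 (a - 3) ltac:(have := ltn_ord a; lia)).
    by congr phi; apply/val_inj => /=; lia.
Qed.

Lemma exists_not_below i (u : T) : i < n -> rank u = i.+1 ->
  exists v, rank v = i /\ ~~ (v < u)%O.
Proof.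
move=> i_lt ru; have [phi [_ phi_rank phi_onto phi_lt]] := crown_at i_lt.
have [b Eb] := phi_onto u ltac:(lia); subst u.
move: ru; rewrite phi_rank; case: ifP => b_bot rb; first lia.
have [a /andP [a_bot ab]] := crown_top_misses (ltac:(lia) : 3 <= b).
by exists (phi a); rewrite phi_rank a_bot phi_lt.
Qed.

Lemma not_below_uniq i (u v v' : T) : i < n -> rank u = i.+1 -> rank v = i ->
  rank v' = i -> ~~ (v < u)%O -> ~~ (v' < u)%O -> v = v'.
Proof.
move=> i_lt ru rv rv'; have [phi [_ phi_rank phi_onto phi_lt]] := crown_at i_lt.
have [b Eb] := phi_onto u ltac:(lia); subst u.
have [a Ea] := phi_onto v ltac:(lia); subst v.
have [a' Ea'] := phi_onto v' ltac:(lia); subst v'.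
move: ru rv rv'; rewrite !phi_rank !phi_lt.
case: ifP => b_bot rb; first lia.
case: ifP => a_bot ra; last lia; case: ifP => a'_bot ra'; last lia.
by move=> H H'; congr phi; apply: (crown_missed_uniq a_bot a'_bot _ H H'); lia.
Qed.

Lemma not_below_inj i (u u' v : T) : i < n -> rank u = i.+1 -> rank u' = i.+1 ->
  rank v = i -> ~~ (v < u)%O -> ~~ (v < u')%O -> u = u'.
Proof.
move=> i_lt ru ru' rv; have [phi [_ phi_rank phi_onto phi_lt]] := crown_at i_lt.
have [b Eb] := phi_onto u ltac:(lia); subst u.
have [b' Eb'] := phi_onto u' ltac:(lia); subst u'.
have [a Ea] := phi_onto v ltac:(lia); subst v.
move: ru ru' rv; rewrite !phi_rank !phi_lt.
case: ifP => b_bot rb; first lia.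
case: ifP => b'_bot rb'; first lia; case: ifP => a_bot ra; last lia.
by move=> H H'; congr phi; apply: (crown_misses_inj a_bot _ _ H H'); lia.
Qed.

(* Each [u] of positive rank lies above all but one element of the level below,
   its [down_mate]; following down-mates to rank 0 labels every element. *)
Definition down_mate (u : T) : T :=
  odflt u [pick v | (rank v == (rank u).-1) && ~~ (v < u)%O].
Definition level0 : {set T} := [set x | rank x == 0].
Definition label (x : T) : 'I_3 :=
  inord (index (iter (rank x) down_mate x) (enum level0)).
Definition level_elt (d : T) i c : T :=
  odflt d [pick x | (rank x == i) && (label x == c)].

Lemma down_mate_spec u : 0 < rank u ->
  rank (down_mate u) = (rank u).-1 /\ ~~ (down_mate u < u)%O.
Proof.
move=> ru; have i_lt : (rank u).-1 < n by have := rank_le_n u; lia.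
have [v [rv vu]] := exists_not_below i_lt (ltac:(lia) : rank u = ((rank u).-1).+1).
rewrite /down_mate; case: pickP => [w /andP [/eqP -> ->] | /(_ v)] //=.
by rewrite rv eqxx vu.
Qed.

Lemma label_down_mate u : 0 < rank u -> label u = label (down_mate u).
Proof.
move=> ru; rewrite /label (down_mate_spec ru).1.
by case: (rank u) ru => [//|m] _; rewrite iterSr.
Qed.

Lemma level0_card : #|level0| <= 3.
Proof.
have [psi [_ psi_rank psi_onto]] := level_enum (leq0n n).
have : level0 \subset psi @: setT.
  by apply/subsetP => x; rewrite inE => /eqP /psi_onto [c ->]; apply: imset_f.
move/subset_leq_card/leq_trans; apply; apply: (leq_trans (leq_imset_card _ _)).
by rewrite cardsT card_ord.
Qed.

Lemma label_inj_at i : i <= n -> forall x y, rank x = i -> rank y = i ->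
  label x = label y -> x = y.
Proof.
elim: i => [|i IH] i_le x y rx ry.
- rewrite /label rx ry /= => /(congr1 (@nat_of_ord 3)).
  have xm : x \in enum level0 by rewrite mem_enum inE rx.
  have ym : y \in enum level0 by rewrite mem_enum inE ry.
  have sz : size (enum level0) <= 3 by rewrite -cardE level0_card.
  rewrite !inordK; try by apply: leq_trans sz; rewrite index_mem.
  by move=> E; rewrite -(nth_index x xm) -(nth_index x ym) E.
- have [rx' x_mate] := down_mate_spec (ltac:(lia) : 0 < rank x).
  have [ry' y_mate] := down_mate_spec (ltac:(lia) : 0 < rank y).
  rewrite (label_down_mate (ltac:(lia) : 0 < rank x)).
  rewrite (label_down_mate (ltac:(lia) : 0 < rank y)).
  rewrite rx in rx'; rewrite ry in ry'.
  move/(IH ltac:(lia) _ _ rx' ry') => E; rewrite E in x_mate.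
  exact: (not_below_inj (ltac:(lia) : i < n) rx ry _ x_mate y_mate).
Qed.

Lemma label_inj x y : rank x = rank y -> label x = label y -> x = y.
Proof. by move=> rxy; apply: (label_inj_at (rank_le_n x)). Qed.

Lemma label_surj i c : i <= n -> exists x, rank x = i /\ label x = c.
Proof.
move=> i_le; have [psi [psi_inj psi_rank _]] := level_enum i_le.
have psi_label c1 c2 : c1 != c2 -> label (psi c1) != label (psi c2).
  by apply: contra => /eqP /(label_inj (etrans (psi_rank _) (esym (psi_rank _)))) /psi_inj ->.
have := psi_label (@Ordinal 3 0 isT) (@Ordinal 3 1 isT) isT.
have := psi_label (@Ordinal 3 1 isT) (@Ordinal 3 2 isT) isT.
have := psi_label (@Ordinal 3 0 isT) (@Ordinal 3 2 isT) isT.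
move=> d02 d12 d01; case: (I3_cover c d01 d12 d02) => ->.
- by exists (psi (@Ordinal 3 0 isT)).
- by exists (psi (@Ordinal 3 1 isT)).
- by exists (psi (@Ordinal 3 2 isT)).
Qed.

Lemma level_elt_spec d i c : i <= n ->
  rank (level_elt d i c) = i /\ label (level_elt d i c) = c.
Proof.
move=> i_le; have [x [rx lx]] := label_surj c i_le.
rewrite /level_elt; case: pickP => [w /andP [/eqP -> /eqP ->] | /(_ x)] //.
by rewrite rx lx !eqxx.
Qed.

Lemma level_elt_eta d x : level_elt d (rank x) (label x) = x.
Proof. by have [rx lx] := level_elt_spec d (label x) (rank_le_n x); apply: label_inj. Qed.

Lemma lt_cover_label x u : rank u = (rank x).+1 -> (x < u)%O = (label x != label u).
Proof.
move=> ru; have [r_mate u_mate] := down_mate_spec (ltac:(lia) : 0 < rank u).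
rewrite (label_down_mate (ltac:(lia) : 0 < rank u)).
have r_mate' : rank (down_mate u) = rank x by rewrite r_mate ru.
case: (eqVneq (label x) (label (down_mate u))) => [/(label_inj (esym r_mate')) E|E].
  by rewrite E (negbTE u_mate).
case: (boolP (x < u)%O) => // xu; move: E.
have i_lt : rank x < n by have := rank_le_n u; lia.
by rewrite (not_below_uniq i_lt ru erefl r_mate' xu u_mate) eqxx.
Qed.

Lemma lt_rank2 (x y : T) : rank x + 2 <= rank y -> (x < y)%O.
Proof.
move=> rxy; have [d ry] : exists d, rank y = rank x + 2 + d by exists (rank y - (rank x + 2)); lia.
elim: d y ry {rxy} => [|d IH] y ry.
- have [c [cx cy]] := I3_avoid2 (label x) (label y).
  have [rc lc] := level_elt_spec x c (ltac:(have := rank_le_n y; lia) : (rank x).+1 <= n).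
  apply: (@lt_trans _ _ (level_elt x (rank x).+1 c)).
    by rewrite lt_cover_label // lc eq_sym.
  by rewrite lt_cover_label ?lc ?rc //; lia.
- have [v [vy rv]] := exists_lt_rank_pred (ltac:(lia) : 0 < rank y).
  exact: (lt_trans (IH v ltac:(lia)) vy).
Qed.

Lemma six_stack_label_model :
  exists (lb : T -> 'I_3) (pt : nat -> 'I_3 -> T), label_model n rank lb pt.
Proof.
have [phi _] := crown_at (ltac:(case: stack; lia) : 0 < n).
exists label, (level_elt (phi ord0)); split.
- by move=> i c /(level_elt_spec (phi ord0) c) [].
- by move=> i c /(level_elt_spec (phi ord0) c) [].
- exact: level_elt_eta.
- exact: rank_le_n.
- move=> x y; case: (ltngtP (rank y) (rank x).+1) => ry.
  + rewrite (_ : rank x + 2 <= rank y = false) /=; last lia.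
    by apply/negbTE/negP => /rank_lt; lia.
  + by rewrite lt_rank2 //; lia.
  + rewrite lt_cover_label // ry (_ : rank x + 2 <= _ = false) //; lia.
Qed.

End SixStack.

Section LabelModel.
Context {disp : Order.disp_t} {T : finPOrderType disp}.
Variables (n : nat) (rk : T -> nat) (lb : T -> 'I_3) (pt : nat -> 'I_3 -> T).
Hypothesis model : label_model n rk lb pt.

Lemma rk_pt i c : i <= n -> rk (pt i c) = i.
Proof. by case: model => + _ _ _ _; apply. Qed.

Lemma lb_pt i c : i <= n -> lb (pt i c) = c.
Proof. by case: model => _ + _ _ _; apply. Qed.

Lemma rk_le x : rk x <= n.
Proof. by case: model. Qed.

Lemma ltE x y : (x < y)%O =
  (rk x + 2 <= rk y) || ((rk y == (rk x).+1) && (lb x != lb y)).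
Proof. by case: model. Qed.

Lemma rk_lb_inj x y : rk x = rk y -> lb x = lb y -> x = y.
Proof. by case: model => _ _ pt_eta _ _ rxy lxy; rewrite -(pt_eta x) -(pt_eta y) rxy lxy. Qed.

Lemma rk_lt x y : (x < y)%O -> rk x < rk y.
Proof. by rewrite ltE => /orP [|/andP [/eqP ry _]]; lia. Qed.

Lemma rk_le_of_le x y : (x <= y)%O -> rk x <= rk y.
Proof. by rewrite le_eqVlt => /orP [/eqP ->//|/rk_lt/ltnW]. Qed.

Lemma lt_rk2 x y : rk x + 2 <= rk y -> (x < y)%O.
Proof. by rewrite ltE => ->. Qed.

Lemma lt_lb x y : rk x < rk y -> lb x != lb y -> (x < y)%O.
Proof.
move=> rxy lxy; rewrite ltE lxy andbT.
by case: (ltngtP (rk y) (rk x).+1) => //; lia.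
Qed.

Lemma le_rk2 x y : rk x + 2 <= rk y -> (x <= y)%O.
Proof. by move/lt_rk2/ltW. Qed.

Lemma le_lb x y : rk x < rk y -> lb x != lb y -> (x <= y)%O.
Proof. by move=> rxy /(lt_lb rxy)/ltW. Qed.

Lemma lb_neq_of_lt x y : (x < y)%O -> rk y = (rk x).+1 -> lb x != lb y.
Proof. by rewrite ltE => /orP [|/andP [_ ->]] //; lia. Qed.

Lemma lb_neq_of_neq x y : rk x = rk y -> x != y -> lb x != lb y.
Proof. by move=> rxy; apply: contra => /eqP /(rk_lb_inj rxy) ->. Qed.

Lemma lb_eq_of_nlt x y : ~~ (x < y)%O -> rk y = (rk x).+1 -> lb x = lb y.
Proof. by move=> xy ry; apply/eqP; apply: contraNT xy; apply: lt_lb; lia. Qed.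

Lemma rk_lt_of_nlt x y : ~~ (x < y)%O -> rk y < rk x + 2.
Proof. by move=> xy; rewrite ltnNge; apply: contra xy; apply: lt_rk2. Qed.

(* Unlike [four_tower], levels are indexed by [nat] below a bound [k], so that
   the upper part of a tower is again a tower ([tower_shift]). *)
Definition is_tower k (g : nat -> bool -> T) := 0 < k /\
  forall l l' b b', l < k -> l' < k ->
    (g l b <= g l' b')%O = (l < l') || ((l == l') && (b == b')).

Section Tower.
Variables (k : nat) (g : nat -> bool -> T).
Hypothesis tower : is_tower k g.

Lemma tower_le_cases l l' b b' : l < k -> l' < k -> (g l b <= g l' b')%O ->
  l < l' \/ (l = l' /\ b = b').
Proof.
move=> lk l'k; rewrite tower.2 // => /orP [->|/andP [/eqP -> /eqP ->]]; by [left|right].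
Qed.

Lemma tower_le_level l l' b b' : l < k -> l' < k -> (g l b <= g l' b')%O -> l <= l'.
Proof. by move=> lk l'k /(tower_le_cases lk l'k) [|[]]; lia. Qed.

Lemma tower_le_eq l l' b b' : l < k -> l' < k -> (g l b <= g l' b')%O -> l' <= l ->
  g l b = g l' b'.
Proof. by move=> lk l'k /(tower_le_cases lk l'k) [|[-> ->]] //; lia. Qed.

Lemma tower_lt l l' b b' : l < l' -> l' < k -> (g l b < g l' b')%O.
Proof.
move=> ll' l'k; rewrite lt_neqAle tower.2 ?ll' ?andbT; try lia.
apply: contraTneq (ll') => E.
by have := tower.2 l' l b' b l'k (ltn_trans ll' l'k); rewrite -E lexx; lia.
Qed.

Lemma tower_pair_neq l s : l < k -> g l s != g l (~~ s).
Proof.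
move=> lk; apply/negP => /eqP E; have := tower.2 l l s (~~ s) lk lk.
by rewrite E lexx ltnn eqxx /=; case: s {E}.
Qed.

Lemma tower_pair_nlt l s : l < k -> ~~ (g l s < g l (~~ s))%O.
Proof. by move=> lk; apply/negP => /ltW; rewrite tower.2 // ltnn eqxx /=; case: s. Qed.

Lemma tower_above_pair l L t s : l < k -> L < k -> (g L s <= g l t)%O ->
  (g L (~~ s) <= g l t)%O -> L < l.
Proof.
move=> lk Lk /(tower_le_cases Lk lk) [//|[-> ->]] /(tower_le_cases lk lk) [|[_]];
  by [rewrite ltnn|case: t].
Qed.

Lemma tower_shift s : s < k -> is_tower (k - s) (fun l b => g (l + s) b).
Proof.
move=> sk; split=> [|l l' b b' lk l'k]; first lia.
by rewrite tower.2 ?ltn_add2r ?eqn_add2r //; lia.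
Qed.

Lemma tower_pair_shape L s : L < k -> rk (g L s) <= rk (g L (~~ s)) ->
  (rk (g L (~~ s)) = rk (g L s) /\ lb (g L s) != lb (g L (~~ s))) \/
  (rk (g L (~~ s)) = (rk (g L s)).+1 /\ lb (g L s) = lb (g L (~~ s))).
Proof.
move=> Lk rs; have nlt := tower_pair_nlt s Lk; have := rk_lt_of_nlt nlt.
case: (ltngtP (rk (g L (~~ s))) (rk (g L s)).+1) => r' r''.
- by left; split; [lia|apply: lb_neq_of_neq; [lia|exact: tower_pair_neq]].
- lia.
- by right; split=> //; apply: lb_eq_of_nlt.
Qed.

End Tower.

Definition above_level k (g : nat -> bool -> T) (f : T -> T) L x :=
  exists l t, [/\ L <= l, l < k & f x = g l t].

Definition retracts_to j k g f := [/\
  forall x, j <= rk x -> above_level k g f 0 x,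
  forall x y, j <= rk x -> (x <= y)%O -> (f x <= f y)%O &
  forall l t, l < k -> f (g l t) = g l t].

Section Retraction.
Variables (j k : nat) (g : nat -> bool -> T) (f : T -> T).
Hypotheses (tower : is_tower k g) (retr : retracts_to j k g f).

Lemma above_level_rk x : j <= rk x -> above_level k g f 0 x.
Proof. by case: retr => + _ _; apply. Qed.

Lemma retract_mono x y : j <= rk x -> (x <= y)%O -> (f x <= f y)%O.
Proof. by case: retr => _ + _; apply. Qed.

Lemma retract_fix l t : l < k -> f (g l t) = g l t.
Proof. by case: retr => _ _; apply. Qed.

Lemma above_level_fix L l t : L <= l -> l < k -> above_level k g f L (g l t).
Proof. by move=> Ll lk; exists l, t; rewrite retract_fix. Qed.

Lemma above_level_pair L y s : L < k -> j <= rk y -> (g L s <= f y)%O ->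
  (g L (~~ s) <= f y)%O -> above_level k g f L.+1 y.
Proof.
move=> Lk jy; have [l [t [_ lk fy]]] := above_level_rk jy; rewrite fy => le le'.
by exists l, t; split=> //; apply: (tower_above_pair tower lk Lk le le').
Qed.

Lemma above_level_mono L y x : j <= rk y -> (y <= x)%O ->
  above_level k g f L y -> above_level k g f L x.
Proof.
move=> jy yx [l [t [Ll lk fy]]]; have := retract_mono jy yx; rewrite fy => le.
have [l' [t' [_ l'k fx]]] := above_level_rk (leq_trans jy (rk_le_of_le yx)).
rewrite fx in le; exists l', t'; split=> //.
exact: leq_trans Ll (tower_le_level tower lk l'k le).
Qed.

Lemma above_level_below L y s : L < k -> j <= rk y -> (y <= g L s)%O ->
  above_level k g f L y -> f y = g L s.
Proof.
move=> Lk jy ys [l [t [Ll lk fy]]]; have := retract_mono jy ys.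
by rewrite retract_fix // fy => le; apply: (tower_le_eq tower) le Ll.
Qed.

Lemma not_above_level_pair L y s : L < k -> j <= rk y -> (y <= g L s)%O ->
  (y <= g L (~~ s))%O -> ~ above_level k g f L y.
Proof.
move=> Lk jy ys ys' above; have := tower_pair_neq tower s Lk.
by rewrite -(above_level_below Lk jy ys above) -(above_level_below Lk jy ys' above) eqxx.
Qed.

Lemma above_level_of_labels L r y1 y2 : j <= r -> rk y1 = r -> rk y2 = r ->
  lb y1 != lb y2 -> above_level k g f L y1 -> above_level k g f L y2 ->
  forall x, r < rk x -> above_level k g f L x.
Proof.
move=> jr ry1 ry2 l12 above1 above2 x rx.
case: (eqVneq (lb y1) (lb x)) => [l1x|l1x].
- by apply: (above_level_mono _ (le_lb _ _) above2); rewrite ?ry2 -?l1x 1?eq_sym.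
- by apply: (above_level_mono _ (le_lb _ _) above1); rewrite ?ry1.
Qed.

Lemma level_pair_above L r y : L < k -> j <= r -> rk y = r ->
  above_level k g f L y -> (forall b, r < rk (g L b)) ->
  exists s, rk (g L s) = r.+1 /\
    (rk (g L (~~ s)) = r.+1 \/ rk (g L (~~ s)) = r.+2 /\ lb (g L s) = lb y).
Proof.
move=> Lk jr ry above high.
have [s rs] : exists s, rk (g L s) <= rk (g L (~~ s)).
  by case: (leqP (rk (g L true)) (rk (g L false))) => h; [exists true|exists false => /=; lia].
have rs1 : rk (g L s) = r.+1.
  apply/eqP; rewrite eqn_leq high andbT leqNgt; apply/negP => rs2.
  by apply: (not_above_level_pair (s := s) Lk _ (le_rk2 _) (le_rk2 _) above); rewrite ?ry //; lia.
exists s; split=> //; case: (tower_pair_shape tower Lk rs) => [[r' _]|[r' _]].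
- by left; lia.
- right; split; first lia.
  case: (eqVneq (lb (g L s)) (lb y)) => // lsy; exfalso.
  by apply: (not_above_level_pair (s := s) Lk _ (le_lb _ _) (le_rk2 _) above);
    rewrite ?ry ?rs1 1?eq_sym //; lia.
Qed.

Lemma level_pair_collapse L r y1 y2 w t : L < k -> j <= r ->
  (forall b, rk (g L b) = r.+1) -> rk y1 = r -> rk y2 = r -> rk w = r.+1 ->
  lb y1 != lb y2 -> lb y1 != lb w -> lb y2 != lb w ->
  above_level k g f L y1 -> above_level k g f L y2 -> f w = g L t -> False.
Proof.
move=> Lk jr rL ry1 ry2 rw l12 l1w l2w above1 above2 fw.
have f_below y : rk y = r -> lb y != lb w -> above_level k g f L y -> f y = g L t.
  move=> ry lyw [l [t' [Ll lk fy]]].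
  have yw : (y <= w)%O by apply: le_lb; rewrite ?ry ?rw.
  have := retract_mono (ltac:(by rewrite ry) : j <= rk y) yw; rewrite fy fw => le.
  exact: (tower_le_eq tower lk Lk le Ll).
have side b : g L b = g L t.
  case: (eqVneq (lb y1) (lb (g L b))) => l1b.
  - rewrite -(f_below y2) //; apply/esym/above_level_below; rewrite ?ry2 //.
    by apply: le_lb; rewrite ?ry2 ?rL // -l1b eq_sym.
  - rewrite -(f_below y1) //; apply/esym/above_level_below; rewrite ?ry1 //.
    by apply: le_lb; rewrite ?ry1 ?rL.
by have := tower_pair_neq tower true Lk; rewrite !side eqxx.
Qed.

Lemma retracts_to_shift j' s : j <= j' ->
  (forall x, j' <= rk x -> above_level k g f s x) ->
  retracts_to j' (k - s) (fun l b => g (l + s) b) f.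
Proof.
move=> jj' above; split.
- move=> x /above [l [t [sl lk fx]]].
  by exists (l - s), t; split; [|lia|rewrite subnK].
- by move=> x y j'x; apply: retract_mono; lia.
- by move=> l t lk; apply: retract_fix; lia.
Qed.

End Retraction.

(* Proved by downward induction on [j]: the induction only uses the first
   conjunct, the second one gives the theorem at [j = 0]. *)
Definition flat_bottom j := forall k g f, is_tower k g -> retracts_to j k g f ->
  (forall b, rk (g 0 b) = j) ->
  (forall x, rk x = j -> exists t, f x = g 0 t) /\
  (j = n \/ [/\ j + 3 <= n, 2 < k, exists b, rk (g 1 b) = j + 2 &
                forall x, j + 3 <= rk x -> above_level k g f 2 x]).

Section Step.
Variables (j k : nat) (g : nat -> bool -> T) (f : T -> T).
Hypotheses (tower : is_tower k g) (retr : retracts_to j k g f).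
Hypothesis flat_above : forall j', j < j' -> j' <= n -> flat_bottom j'.

Lemma level_absorbs L r : L < k -> j < r -> (forall b, rk (g L b) = r) ->
  (forall x, r <= rk x -> above_level k g f L x) ->
  forall x, rk x = r -> exists t, f x = g L t.
Proof.
move=> Lk jr rL above x rx.
have r_le : r <= n by rewrite -(rL true) rk_le.
have [absorb _] := flat_above jr r_le (tower_shift tower Lk)
  (retracts_to_shift retr (ltnW jr) above) rL.
by have [t] := absorb x rx; exists t.
Qed.

(* The level would be flat at rank [r.+1] and, by induction, absorb all of
   rank [r.+1]; the element of the third label then collapses it. *)
Lemma two_labels_below_level L r y1 y2 : L < k -> j <= r -> rk y1 = r -> rk y2 = r ->
  lb y1 != lb y2 -> above_level k g f L y1 -> above_level k g f L y2 ->
  (forall b, r < rk (g L b)) -> False.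
Proof.
move=> Lk jr ry1 ry2 l12 above1 above2 high.
have [s [rs [rs'|[rs' ls]]]] := level_pair_above tower retr Lk jr ry1 above1 high; last first.
  apply: (not_above_level_pair tower retr (s := s) Lk _ (le_lb _ _) (le_rk2 _) above2);
  by rewrite ?ry2 ?rs ?ls 1?eq_sym //; lia.
have rL b : rk (g L b) = r.+1 by case: b; case: (s) rs rs'.
have r_lt : r < n by rewrite -(rL true) rk_le.
have [w [w1 w2]] := I3_avoid2 (lb y1) (lb y2).
have [t fw] := level_absorbs Lk (jr : j < r.+1) rL
  (above_level_of_labels tower retr jr ry1 ry2 l12 above1 above2) (rk_pt w r_lt).
apply: (level_pair_collapse tower retr Lk jr rL ry1 ry2 (rk_pt w r_lt) l12 _ _ above1 above2 fw);
  by rewrite lb_pt // eq_sym.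
Qed.

Section FlatBottom.
Variable z : 'I_3.
Hypotheses (bottom_rk : forall b, rk (g 0 b) = j) (z_new : forall b, lb (g 0 b) != z).
Hypothesis j_lt : j < n.

Let k_gt0 : 0 < k := tower.1.
Let j_le : j <= n := ltnW j_lt.
Let rk_z : rk (pt j z) = j := rk_pt z j_le.
Let j_z : j <= rk (pt j z) := eq_leq (esym rk_z).

Lemma bottom_lb_neq b : lb (g 0 b) != lb (g 0 (~~ b)).
Proof. by apply: lb_neq_of_neq; [rewrite !bottom_rk|exact: (tower_pair_neq tower b k_gt0)]. Qed.

Lemma rank_bottom_cases x : rk x = j -> [\/ x = g 0 false, x = g 0 true | x = pt j z].
Proof.
move=> rx; case: (I3_cover (lb x) (bottom_lb_neq false) (z_new true) (z_new false)) => lx;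
  [constructor 1|constructor 2|constructor 3]; apply: rk_lb_inj;
  by rewrite ?rk_z ?lb_pt ?bottom_rk //; lia.
Qed.

Lemma tower_rk_ge l t : l < k -> j <= rk (g l t).
Proof.
case: l => [|l] lk; first by rewrite bottom_rk.
by have := rk_lt (tower_lt tower t t (ltn0Sn l) lk); rewrite bottom_rk; lia.
Qed.

Lemma tower_le_f l t y : l < k -> (g l t <= y)%O -> (g l t <= f y)%O.
Proof. by move=> lk le; rewrite -(retract_fix retr t lk); exact: (retract_mono retr (tower_rk_ge t lk) le). Qed.

Lemma pt_succ_z_above1 : above_level k g f 1 (pt j.+1 z).
Proof.
have rk_z1 : rk (pt j.+1 z) = j.+1 := rk_pt z j_lt.
apply: (above_level_pair tower retr (s := true) k_gt0); rewrite ?rk_z1 //;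
  by apply: tower_le_f; rewrite // le_lb ?rk_z1 ?bottom_rk ?lb_pt.
Qed.

Lemma level1_gt : 1 < k.
Proof. by case: pt_succ_z_above1 => l [t [l1 lk _]]; lia. Qed.

Lemma level1_rk b : j < rk (g 1 b).
Proof. by have := rk_lt (tower_lt tower b b (ltn0Sn 0) level1_gt); rewrite bottom_rk. Qed.

(* Otherwise [pt j z] lies below the whole first level, so [f] keeps it at the
   bottom, and two elements of rank [j.+1] reach the first level. *)
Lemma level1_low : exists s, rk (g 1 s) = j.+1.
Proof.
case: (eqVneq (rk (g 1 true)) j.+1) => [|r1]; first by exists true.
case: (eqVneq (rk (g 1 false)) j.+1) => [|r0]; first by exists false.
have high b : j.+1 < rk (g 1 b) by have := level1_rk b; case: b; lia.
have below b : (pt j z <= g 1 b)%O by apply: le_rk2; rewrite rk_z; have := high b; lia.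
have [l [t [_ lk fz]]] := above_level_rk retr j_z.
have {lk} l0 : l = 0.
  case: l lk fz => // l lk fz; exfalso.
  apply: (not_above_level_pair tower retr level1_gt j_z (below true) (below false)).
  by exists l.+1, t.
subst l; have rk_t1 : rk (pt j.+1 (lb (g 0 t))) = j.+1 := rk_pt _ j_lt.
have above_t : above_level k g f 1 (pt j.+1 (lb (g 0 t))).
  apply: (above_level_pair tower retr (s := t) k_gt0); rewrite ?rk_t1 //.
  - have zt : (pt j z <= pt j.+1 (lb (g 0 t)))%O.
      by apply: le_lb; rewrite ?rk_z ?rk_t1 ?lb_pt // eq_sym z_new.
    by have := retract_mono retr j_z zt; rewrite fz.
  - by apply: tower_le_f; rewrite // le_lb ?rk_t1 ?bottom_rk ?lb_pt // eq_sym bottom_lb_neq.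
exfalso; apply: (two_labels_below_level level1_gt (leqnSn j) rk_t1 (rk_pt z j_lt) _ above_t
  pt_succ_z_above1 high).
by rewrite !lb_pt.
Qed.

Lemma level1_vertical s : rk (g 1 s) = j.+1 ->
  [/\ lb (g 1 s) = z, rk (g 1 (~~ s)) = j.+2 & lb (g 1 (~~ s)) = z].
Proof.
move=> rs; have lb1 b : rk (g 1 b) = j.+1 -> lb (g 1 b) = z.
  move=> rb; have lt b' : (g 0 b' < g 1 b)%O := tower_lt tower b' b (ltn0Sn 0) level1_gt.
  have /lb_neq_of_lt n0 := lt false; have /lb_neq_of_lt n1 := lt true.
  move: (n0 ltac:(by rewrite rb bottom_rk)) (n1 ltac:(by rewrite rb bottom_rk)).
  by case: (I3_cover (lb (g 1 b)) (bottom_lb_neq false) (z_new true) (z_new false)) => -> /=;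
    rewrite ?eqxx.
have rs' : rk (g 1 s) <= rk (g 1 (~~ s)) by rewrite rs; apply: level1_rk.
case: (tower_pair_shape tower level1_gt rs') => [[r' l']|[r' l']].
- by move: l'; rewrite !lb1 ?eqxx //; lia.
- by rewrite -l' lb1 //; split=> //; lia.
Qed.

(* If [f] lifted [pt j z] to the upper element of the first level, every
   element of rank [j.+2] carrying a bottom label would be sent above the
   first level. *)
Lemma f_pt_z_neq_top s : rk (g 1 s) = j.+1 -> f (pt j z) != g 1 (~~ s).
Proof.
move=> rs; have [lc rd ld] := level1_vertical rs; apply/eqP => fz.
have j2_le : j.+2 <= n by rewrite -rd rk_le.
have rk_p b : rk (pt j.+2 (lb (g 0 b))) = j.+2 := rk_pt _ j2_le.
have above_p b : above_level k g f 2 (pt j.+2 (lb (g 0 b))).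
  apply: (above_level_pair tower retr (s := s) level1_gt); rewrite ?rk_p //; first lia.
  - by apply: (tower_le_f level1_gt); apply: le_lb; rewrite ?rk_p ?rs ?lb_pt ?lc // eq_sym z_new.
  - have zp : (pt j z <= pt j.+2 (lb (g 0 b)))%O by apply: le_rk2; rewrite rk_z rk_p addn2.
    by have := retract_mono retr j_z zp; rewrite fz.
have k2 : 2 < k by case: (above_p true) => l [t [l2 lk _]]; lia.
apply: (two_labels_below_level k2 _ (rk_p false) (rk_p true) _ (above_p false) (above_p true)).
- lia.
- by rewrite !lb_pt //; apply: (bottom_lb_neq false).
- by move=> b; rewrite -rd; apply/rk_lt/(tower_lt tower _ _ (ltnSn 1) k2).
Qed.

Lemma f_pt_z_bottom : exists t, f (pt j z) = g 0 t.
Proof.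
have [s rs] := level1_low; have [_ rd _] := level1_vertical rs.
have [l [t [_ lk fz]]] := above_level_rk retr j_z.
have : (f (pt j z) <= g 1 (~~ s))%O.
  rewrite -(retract_fix retr (~~ s) level1_gt).
  by apply: (retract_mono retr j_z); apply: le_rk2; rewrite rk_z rd addn2.
rewrite fz => /(tower_le_cases tower lk level1_gt) [l0|[l1 ts]].
- by exists t; rewrite (_ : l = 0) //; lia.
- by move: (f_pt_z_neq_top rs); rewrite fz l1 ts eqxx.
Qed.

(* Here [pt j.+1] of the label of [f (pt j z)] is sent to the upper element of
   the first level, so [pt j.+2] of the other bottom label reaches level 2. *)
Lemma other_bottom_label_above2 s t : rk (g 1 s) = j.+1 -> f (pt j z) = g 0 t ->
  above_level k g f 2 (pt j.+2 (lb (g 0 (~~ t)))).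
Proof.
move=> rs fz; have [lc rd ld] := level1_vertical rs.
have rk_y : rk (pt j.+1 (lb (g 0 t))) = j.+1 := rk_pt _ j_lt.
have j2_le : j.+2 <= n by rewrite -rd rk_le.
have rk_p : rk (pt j.+2 (lb (g 0 (~~ t)))) = j.+2 := rk_pt _ j2_le.
have j_y : j <= rk (pt j.+1 (lb (g 0 t))) by rewrite rk_y.
have fy : f (pt j.+1 (lb (g 0 t))) = g 1 (~~ s).
  apply: (above_level_below tower retr level1_gt j_y).
    by apply: le_lb; rewrite ?rk_y ?rd ?ld ?lb_pt.
  apply: (above_level_pair tower retr (s := t) k_gt0 j_y).
  - have zy : (pt j z <= pt j.+1 (lb (g 0 t)))%O.
      by apply: le_lb; rewrite ?rk_z ?rk_y ?lb_pt // eq_sym z_new.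
    by have := retract_mono retr j_z zy; rewrite fz.
  - apply: (tower_le_f k_gt0); apply: le_lb; rewrite ?rk_y ?bottom_rk ?lb_pt //.
    by rewrite eq_sym bottom_lb_neq.
apply: (above_level_pair tower retr (s := s) level1_gt); first by rewrite rk_p; lia.
- by apply: (tower_le_f level1_gt); apply: le_lb; rewrite ?rk_p ?rs ?lb_pt ?lc // eq_sym z_new.
- have yp : (pt j.+1 (lb (g 0 t)) <= pt j.+2 (lb (g 0 (~~ t))))%O.
    by apply: le_lb; rewrite ?rk_y ?rk_p ?lb_pt ?bottom_lb_neq.
  by have := retract_mono retr j_y yp; rewrite fy.
Qed.

(* Every element of rank at least [j + 3] lies above [pt j.+2 (lb (g 0 (~~ t)))]
   except the one of rank [j + 3] with that label, which belongs to level 2. *)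
Lemma levels_above2 s t : rk (g 1 s) = j.+1 -> f (pt j z) = g 0 t ->
  [/\ j + 3 <= n, 2 < k & forall x, j + 3 <= rk x -> above_level k g f 2 x].
Proof.
move=> rs fz; have [_ rd ld] := level1_vertical rs.
have above_p := other_bottom_label_above2 rs fz.
have j2_le : j.+2 <= n by rewrite -rd rk_le.
have rk_p : rk (pt j.+2 (lb (g 0 (~~ t)))) = j.+2 := rk_pt _ j2_le.
have k2 : 2 < k by case: above_p => l [t' [l2 lk _]]; lia.
have high b : j.+2 < rk (g 2 b).
  by rewrite -rd; apply/rk_lt/(tower_lt tower _ _ (ltnSn 1) k2).
have [s2 [rs2 shape]] := level_pair_above tower retr k2 (ltnW (leqnSn _)) rk_p above_p high.
have [b [rb lbb]] : exists b, rk (g 2 b) = j.+3 /\ lb (g 2 b) = lb (g 0 (~~ t)).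
  case: shape => [rs2'|[_ ls2]]; last by exists s2; rewrite lb_pt in ls2.
  have lz b : rk (g 2 b) = j.+3 -> lb (g 2 b) != z.
    move=> rb; rewrite -ld eq_sym.
    by apply: lb_neq_of_lt; [exact: (tower_lt tower _ _ (ltnSn 1) k2)|rewrite rb rd].
  have l2 : lb (g 2 s2) != lb (g 2 (~~ s2)).
    by apply: lb_neq_of_neq; [rewrite rs2 rs2'|exact: (tower_pair_neq tower s2 k2)].
  case: (I3_cover (lb (g 0 (~~ t))) l2 (lz _ rs2') (lz _ rs2)) => lt.
  - by exists s2.
  - by exists (~~ s2).
  - by move: (z_new (~~ t)); rewrite lt eqxx.
have j3_le : j + 3 <= n by have := rk_le (g 2 b); lia.
split=> // x rx.
case: (eqVneq (lb x) (lb (g 0 (~~ t)))) => [lx|lx]; last first.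
  by apply: (above_level_mono tower retr _ (le_lb _ _) above_p);
    rewrite ?rk_p ?lb_pt 1?eq_sym //; lia.
case: (ltngtP (rk x) j.+3) => [|rx3|rx3]; first lia.
- by apply: (above_level_mono tower retr _ (le_rk2 _) above_p); rewrite ?rk_p //; lia.
- by rewrite (@rk_lb_inj x (g 2 b)) ?rx3 ?rb ?lbb //; exact: (above_level_fix retr _ (leqnn 2) k2).
Qed.

Lemma flat_bottom_lt :
  (forall x, rk x = j -> exists t, f x = g 0 t) /\
  [/\ j + 3 <= n, 2 < k, exists b, rk (g 1 b) = j + 2 &
      forall x, j + 3 <= rk x -> above_level k g f 2 x].
Proof.
have [s rs] := level1_low; have [t fz] := f_pt_z_bottom.
have [_ rd _] := level1_vertical rs; have [j3_le k2 above2] := levels_above2 rs fz.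
split; last by split=> //; exists (~~ s); rewrite rd addn2.
move=> x /rank_bottom_cases [->|->|->]; last by exists t.
- by exists false; rewrite (retract_fix retr false k_gt0).
- by exists true; rewrite (retract_fix retr true k_gt0).
Qed.

End FlatBottom.
End Step.

Lemma flat_bottom_step j : (forall j', j < j' -> j' <= n -> flat_bottom j') -> flat_bottom j.
Proof.
move=> flat_above k g f tower retr bottom_rk.
case: (ltngtP j n) => [j_lt|j_gt|j_n].
- have [z [z0 z1]] := I3_avoid2 (lb (g 0 false)) (lb (g 0 true)).
  have z_new b : lb (g 0 b) != z by case: b; rewrite eq_sym.
  have [rank_j above] := flat_bottom_lt tower retr flat_above bottom_rk z_new j_lt.
  by split=> //; right.
- by have := rk_le (g 0 true); rewrite bottom_rk; lia.
- split; last by left.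
  move=> x rx; have [l [t [_ lk fx]]] := above_level_rk retr (eq_leq (esym rx)).
  exists t; rewrite fx; case: l lk fx => // l lk _.
  have := rk_lt (tower_lt tower t t (ltn0Sn l) lk).
  by rewrite bottom_rk; have := rk_le (g l.+1 t); lia.
Qed.

Lemma flat_bottom_all j : flat_bottom j.
Proof.
move: {2}(n - j) (leqnn (n - j)) => m; elim: m j => [|m IH] j jm;
  apply: flat_bottom_step => j' jj' j'n; [lia|apply: IH; lia].
Qed.

End LabelModel.

Section TowerSets.
Context {disp : Order.disp_t} {T : finPOrderType disp}.

Definition tower_set k (g : nat -> bool -> T) : {set T} :=
  (fun p : 'I_k * bool => g p.1 p.2) @: setT.

Lemma mem_tower_set k g x :
  reflect (exists l b, l < k /\ x = g l b) (x \in tower_set k g).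
Proof.
apply: (iffP imsetP) => [[[l b] _ ->]|[l [b [lk ->]]]]; first by exists l, b.
by exists (Ordinal lk, b).
Qed.

Lemma four_tower_tower (Q : {set T}) : four_tower Q ->
  exists k g, is_tower k g /\ Q = tower_set k g.
Proof.
case=> [k [k_gt0 [G [_ -> G_le]]]]; case: k k_gt0 G G_le => // k _ G G_le.
exists k.+1, (fun l b => G (inord l, b)); split.
- split=> // l l' b b' lk l'k; rewrite G_le /tower_le /= !inordK //.
  by rewrite xpair_eqE -[inord l == _](inj_eq val_inj) /= !inordK.
- by apply/setP => x; apply/imsetP/mem_tower_set =>
    [[[l b] _ ->]|[l [b [lk ->]]]]; [exists l, b; rewrite inord_val|exists (inord l, b)].
Qed.

Lemma tower_set_four_tower k g : is_tower k g -> four_tower (tower_set k g).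
Proof.
move=> tower; exists k; split; first exact: tower.1.
have G_le (p q : 'I_k * bool) : (g p.1 p.2 <= g q.1 q.2)%O = tower_le p q.
  by case: p q => [l b] [l' b']; rewrite tower.2 // /tower_le xpair_eqE.
exists (fun p => g (nat_of_ord p.1) p.2); split=> // p q E.
move: (G_le p q) (G_le q p); rewrite E lexx /tower_le.
by move=> /esym /orP [|/eqP //] /[swap] /esym /orP [|/eqP //]; lia.
Qed.

Lemma retract_setT_tower rk k g : is_tower k g -> retract setT (tower_set k g) ->
  exists f, retracts_to rk 0 k g f.
Proof.
move=> tower [_ [f [fQ f_mono f_fix]]]; exists f; split.
- move=> x _; have /mem_tower_set [l [t [lk fx]]] := fQ x (in_setT x).
  by exists l, t.
- by move=> x y _; apply: f_mono; rewrite in_setT.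
- by move=> l t lk; apply/f_fix/mem_tower_set; exists l, t.
Qed.

(* The minimal elements of a tower are those of its bottom level. *)
Lemma tower_bottom_rank k g : is_tower k g ->
  #|Prange 0 0 :&: minimals (tower_set k g)| = 2 -> forall b, rank (g 0 b) = 0.
Proof.
move=> tower two b; case: (eqVneq (rank (g 0 b)) 0) => // rb; exfalso.
suff : Prange 0 0 :&: minimals (tower_set k g) \subset [set g 0 (~~ b)].
  by move/subset_leq_card; rewrite cards1 two.
apply/subsetP => x; rewrite !inE => /andP [/andP [_ rx0] /andP [xQ /forallP min]].
have {rx0} rx : rank x = 0 by apply/eqP; rewrite -leqn0; exact: rx0.
case/mem_tower_set: xQ => [[|l] [t [lk Ex]]]; subst x.
- case: (eqVneq t b) rx => [-> /eqP|tb _]; first by rewrite (negPf rb).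
  by case: t b {rb min} tb => [] [].
- have := min (g 0 t); rewrite (tower_lt tower _ _ (ltn0Sn l) lk) implybF => /negP; case.
  by apply/mem_tower_set; exists 0, t; split=> //; apply: tower.1.
Qed.

Lemma retracts_to_retract n r k g f : retracts_to rank r k g f ->
  (forall x : T, rank x <= n) -> (forall l b, l < k -> r <= rank (g l b)) ->
  retract (Prange r n) (tower_set k g).
Proof.
move=> retr rank_le g_rk; split.
  apply/subsetP => x /mem_tower_set [l [b [lk ->]]].
  by rewrite inE; apply/andP; split; [exact: g_rk|exact: rank_le].
exists f; split.
- move=> x; rewrite inE => /andP [rx _].
  have [l [t [_ lk ->]]] := above_level_rk retr rx.
  by apply/mem_tower_set; exists l, t.
- by move=> x y; rewrite inE => /andP [rx _] _; exact: (retract_mono retr rx).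
- by move=> q /mem_tower_set [l [t [lk ->]]]; exact: (retract_fix retr t lk).
Qed.

End TowerSets.

Unset Implicit Arguments. Set Strict Implicit.

Theorem lemma5p8 (disp : Order.disp_t) (T : finPOrderType disp) (n : nat)
  (Q : {set T}) :
  six_stack (T := T) n -> retract setT Q -> four_tower Q ->
  #|Prange 0 0 :&: minimals Q| = 2 ->
  (3 <= n)%N /\
  exists Q' : {set T}, retract (Prange 3 n) Q' /\ four_tower Q'.
Proof.
move=> stack retrQ /four_tower_tower [k [g [tower EQ]]] bottom2; subst Q.
have [lb [pt model]] := six_stack_label_model stack.
have [f retr] := retract_setT_tower rank tower retrQ.
have bottom_rk := tower_bottom_rank tower bottom2.
have [_ [n0|[n3 k2 [b rb] above2]]] := flat_bottom_all model tower retr bottom_rk.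
  by case: stack; rewrite -n0.
split=> //; exists (tower_set (k - 2) (fun l b => g (l + 2) b)); split.
- apply: (retracts_to_retract (retracts_to_shift retr (leq0n 3) above2) (rank_le_n stack)).
  move=> l b' lk; have lt2 : (g 1 b < g (l + 2) b')%O by apply: (tower_lt tower); lia.
  by have := rank_lt lt2; rewrite rb; lia.
- exact: tower_set_four_tower (tower_shift tower k2).
Qed.
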